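(* Let $E$ be a complex vector space of dimension $n$ with coordinates $(z_1,\dots,z_n)$ and $\omega=\sum_{j=1}^n i\,dz_j\wedge d\bar z_j$. Let $p,q$ be integers with $q\ge2$ and $p+q\le n$, and let $\alpha\in V^{p,q-1}$. Assume that for every $\varphi\in V^{0,1}$ there exists $\beta\in V^{p-1,q-1}$ with $\alpha\wedge\varphi=\omega\wedge\beta$. Then there exists $\gamma\in V^{p-1,q-2}$ with $\alpha=\omega\wedge\gamma$.
   Context: $V^{p,q}:=\bigwedge^pE\otimes\bigwedge^q\overline E$ is the space of $(p,q)$-forms on $E$, with $V^{p,q}:=0$ unless $0\le p,q\le n$. *)

From HB Require Import structures.
From mathcomp Require Import all_boot all_order all_algebra.
Set Implicit Arguments. Unset Strict Implicit. Unset Printing Implicit Defensive.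
Import Order.TTheory GRing.Theory Num.Theory.
Local Open Scope ring_scope.

(* A form: coefficient of dz_I /\ dzbar_J for each pair (I, J). *)
Definition cform (n : nat) (C : numClosedFieldType) :=
  {ffun {set 'I_n} * {set 'I_n} -> C}.

(* V^{p,q}: only bidegree (p,q) coefficients are nonzero; degrees are
   integers, so V^{p,q} = 0 automatically when p < 0 or q < 0 (or > n). *)
Definition in_V (n : nat) (C : numClosedFieldType) (p q : int) (f : cform n C) :=
  forall I J : {set 'I_n}, f (I, J) != 0 ->
    (#|I|%:Z = p) /\ (#|J|%:Z = q).

Definition ninv (n : nat) (A B : {set 'I_n}) : nat :=
  #|[set ab : 'I_n * 'I_n | [&& ab.1 \in A, ab.2 \in B & (ab.2 < ab.1)%N]]|.

(* sign of  dz_I1 /\ dzb_J1 /\ dz_I2 /\ dzb_J2 = sign * dz_(I1 u I2) /\ dzb_(J1 u J2) *)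
Definition wsign (n : nat) (C : numClosedFieldType) (I1 J1 I2 J2 : {set 'I_n}) : C :=
  (-1) ^+ (#|J1| * #|I2| + ninv I1 I2 + ninv J1 J2).

Definition wedge (n : nat) (C : numClosedFieldType) (f g : cform n C) : cform n C :=
  [ffun IJ : {set 'I_n} * {set 'I_n} =>
     \sum_(I1 : {set 'I_n} | I1 \subset IJ.1)
       \sum_(J1 : {set 'I_n} | J1 \subset IJ.2)
         wsign C I1 J1 (IJ.1 :\: I1) (IJ.2 :\: J1)
           * f (I1, J1) * g (IJ.1 :\: I1, IJ.2 :\: J1)].

Definition omega (n : nat) (C : numClosedFieldType) : cform n C :=
  [ffun IJ : {set 'I_n} * {set 'I_n} =>
     if (#|IJ.1| == 1)%N && (IJ.1 == IJ.2) then 'i else 0].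

(* In coordinates, the (I,J)-coefficient of omega /\ g is i times
   L g (I,J) = sum_(j in I :&: J) +- g (I - j, J - j), the Lefschetz operator.
   For each index k, the hypothesis with phi = dzbar_k gives beta_k such that
   alpha /\ dzbar_k = omega /\ beta_k; reading this equation at (I, J + k) shows
   that alpha = omega /\ gamma_k at every (I,J) not involving k, where gamma_k is
   beta_k contracted against dzbar_k.  Two candidates gamma_k and gamma_k' differ
   by a form of bidegree (p-1, q-2) killed by L at all multi-indices avoiding
   {k, k'}.  The adjoint Lambda of L, contracting only indices outside {k, k'},
   satisfies an sl2 relation [L, Lambda] = scalar, and since p + q <= n the
   scalars met along the iterates Lambda^r never vanish; so L is injective in
   this degree, the gamma_k agree wherever they are all defined, and they glue
   to gamma. *)

From mathcomp Require Import all_boot all_order all_algebra zify ring.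
Set Implicit Arguments. Unset Strict Implicit. Unset Printing Implicit Defensive.
Import Order.TTheory GRing.Theory Num.Theory.
Local Open Scope ring_scope.

Lemma exists_notin (T : finType) (A : {set T}) : (#|A| < #|T|)%N -> exists x, x \notin A.
Proof.
move=> ltA; have /set0Pn[x] : ~: A != set0 by rewrite -card_gt0; have := cardsC A; lia.
by rewrite inE; exists x.
Qed.

Lemma setDU1_eq_set1 (T : finType) (k : T) (J J1 : {set T}) :
  k \notin J -> J1 \subset k |: J -> (k |: J) :\: J1 = [set k] -> J1 = J.
Proof.
move=> kJ sJ1 hD.
by rewrite -(setIidPr sJ1) -[_ :&: _]set0U -(setDv (k |: J)) -setDDr hD setU1K.
Qed.

Lemma setU1D (T : finType) (k : T) (J : {set T}) : k \notin J -> (k |: J) :\: J = [set k].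
Proof. by move=> kJ; rewrite setDUl setDv setU0; apply/setDidPl; rewrite disjoints1. Qed.

Lemma setU1D1 (T : finType) (j k : T) (X : {set T}) : j != k -> (k |: X) :\ j = k |: (X :\ j).
Proof.
by move=> jk; apply/setP => x; rewrite !inE; case: (x =P k) => [->|]; rewrite ?(eq_sym k) ?jk.
Qed.

Lemma signr_addn_double {R : pzRingType} (a m : nat) : (-1) ^+ (a + m.*2) = (-1) ^+ a :> R.
Proof. by rewrite -signr_odd oddD odd_double addbF signr_odd. Qed.

Section Inversions.
Variable n : nat.
Implicit Types (A B : {set 'I_n}) (j k : 'I_n).

Lemma ninv_setUr A B1 B2 :
  [disjoint B1 & B2] -> ninv A (B1 :|: B2) = (ninv A B1 + ninv A B2)%N.
Proof.
move=> dB; rewrite /ninv -cardsUI (_ : _ :&: _ = set0) ?cards0 ?addn0.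
  by apply: eq_card => -[x y]; rewrite !inE andb_orl andb_orr.
apply/setP => -[x y]; rewrite !inE /=.
by case: (boolP (y \in B1)) => [yB1|_]; rewrite ?(disjointFr dB yB1) /= ?(andbF, andFb).
Qed.

Lemma ninv_setUl A1 A2 B :
  [disjoint A1 & A2] -> ninv (A1 :|: A2) B = (ninv A1 B + ninv A2 B)%N.
Proof.
move=> dA; rewrite /ninv -cardsUI (_ : _ :&: _ = set0) ?cards0 ?addn0.
  by apply: eq_card => -[x y]; rewrite !inE andb_orl.
apply/setP => -[x y]; rewrite !inE /=.
by case: (boolP (x \in A1)) => [xA1|_]; rewrite ?(disjointFr dA xA1) /= ?(andbF, andFb).
Qed.

Lemma ninv_set0r A : ninv A set0 = 0%N.
Proof. by apply/eqP; rewrite cards_eq0; apply/eqP/setP => -[x y]; rewrite !inE andbF. Qed.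

Lemma ninv_set1 j k : ninv [set j] [set k] = (k < j)%N.
Proof.
rewrite /ninv (_ : [set ab | _] = if (k < j)%N then [set (j, k)] else set0).
  by case: ifP; rewrite ?cards1 ?cards0.
apply/setP => -[x y]; rewrite !inE /=.
by case: ifP => hkj; rewrite ?inE ?xpair_eqE; case: eqP => [->|] //=; case: eqP => [->|] //=.
Qed.

Lemma ninv_set1U1r j k B :
  k \notin B -> ninv [set j] (k |: B) = ((k < j) + ninv [set j] B)%N.
Proof. by move=> kB; rewrite ninv_setUr ?disjoints1 // ninv_set1. Qed.

Lemma ninv_setU1l j k A :
  j \notin A -> ninv (j |: A) [set k] = ((k < j) + ninv A [set k])%N.
Proof. by move=> jA; rewrite ninv_setUl ?disjoints1 // ninv_set1. Qed.

End Inversions.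

Section Lefschetz.
Variables (C : numClosedFieldType) (n : nat).
Implicit Types (I J K X Y : {set 'I_n}) (j k : 'I_n) (e : {set 'I_n} -> {set 'I_n} -> C).

Definition lsign j I J : C := wsign C [set j] [set j] (I :\ j) (J :\ j).

Lemma lsign_swap j k I J : j \in I -> j \in J -> k \notin I -> k \notin J ->
  lsign k (k |: I) (k |: J) * lsign j (k |: I) (k |: J) =
  lsign j I J * lsign k (k |: I :\ j) (k |: J :\ j).
Proof.
move=> jI jJ kI kJ; have jk : j != k by apply: contraNneq kI => <-.
rewrite -(setD1K jI) -(setD1K jJ) in kI kJ *.
set X := I :\ j in kI *; set Y := J :\ j in kJ *.
have [jX jY] : j \notin X /\ j \notin Y by rewrite !setD11.
have [kX kY] : k \notin X /\ k \notin Y.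
  by move: kI kJ; rewrite !in_setU1 !negb_or => /andP[_ ->] /andP[_ ->].
rewrite /lsign /wsign !cards1 !mul1n (setU1K kI) (setU1K kJ) (setU1K jX) (setU1K jY).
rewrite (setU1K kX) (setU1K kY) (setU1D1 (j |: X) jk) (setU1D1 (j |: Y) jk) (setU1K jX) (setU1K jY).
rewrite !ninv_set1U1r // !cardsU1 jX kX -!exprD.
rewrite -[RHS](signr_addn_double _ (1 + (j < k) + (k < j))); congr (_ ^+ _); lia.
Qed.

Lemma lsign_setU1r j k I J : j \in J -> k \notin J ->
  (-1) ^+ ninv J [set k] * lsign j I (k |: J) = lsign j I J * (-1) ^+ ninv (J :\ j) [set k].
Proof.
move=> jJ kJ; have jk : j != k by apply: contraNneq kJ => <-.
have kJj : k \notin J :\ j by rewrite inE negb_and kJ orbT.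
rewrite -{1}(setD1K jJ) ninv_setU1l ?setD11 // /lsign /wsign !cards1 !mul1n.
rewrite setU1D1 // ninv_set1U1r // -!exprD.
rewrite -[RHS](signr_addn_double _ (k < j)); congr (_ ^+ _).
set x := ninv (J :\ j) _; set y := #|I :\ j|; set z := ninv _ (I :\ j); set w := ninv _ (J :\ j).
by clearbody x y z w; lia.
Qed.

Definition lefschetz e I J : C :=
  \sum_(j in I :&: J) lsign j I J * e (I :\ j) (J :\ j).

Definition lefschetz_adj K e I J : C :=
  \sum_(k in ~: (I :|: J :|: K)) lsign k (k |: I) (k |: J) * e (k |: I) (k |: J).

Lemma lsign_lefschetz_setU1 e k I J : k \notin I -> k \notin J ->
  lsign k (k |: I) (k |: J) * lefschetz e (k |: I) (k |: J) =
  e I J + \sum_(j in I :&: J)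
            lsign k (k |: I) (k |: J) * lsign j (k |: I) (k |: J) *
            e (k |: I :\ j) (k |: J :\ j).
Proof.
move=> kI kJ; rewrite /lefschetz -setUIr (bigD1 k) ?setU11 //= setU1K // setU1K //.
rewrite mulrDr signrMK; congr (_ + _); rewrite mulr_sumr.
apply: eq_big => [j|j]; first by rewrite !inE; case: eqP => [->|]; rewrite ?(negPf kI) ?andbT.
by rewrite !inE => /andP[_ jk]; rewrite !setU1D1 // mulrA.
Qed.

Lemma lsign_lefschetz_adj_setD1 K e j I J : j \in I -> j \in J -> j \notin K ->
  lsign j I J * lefschetz_adj K e (I :\ j) (J :\ j) =
  e I J + \sum_(k in ~: (I :|: J :|: K))
            lsign j I J * lsign k (k |: I :\ j) (k |: J :\ j) *
            e (k |: I :\ j) (k |: J :\ j).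
Proof.
move=> jI jJ jK; rewrite /lefschetz_adj (bigD1 j) /=; last by rewrite !inE eqxx jK.
rewrite (setD1K jI) (setD1K jJ) mulrDr signrMK; congr (_ + _); rewrite mulr_sumr.
apply: eq_big => [k|k _]; last by rewrite mulrA.
by rewrite !inE; have [->|_] := eqVneq k j; rewrite ?jI ?andbF ?andbT.
Qed.

Lemma lefschetz_commutator K e I J : [disjoint K & I :|: J] ->
  lefschetz (lefschetz_adj K e) I J = lefschetz_adj K (lefschetz e) I J
    - (#|~: (I :|: J :|: K)|%:R - #|I :&: J|%:R) * e I J.
Proof.
move=> dK; set F := ~: (I :|: J :|: K).
have expand_adj j : j \in I :&: J ->
    lsign j I J * lefschetz_adj K e (I :\ j) (J :\ j) =
    e I J + \sum_(k in F) lsign j I J * lsign k (k |: I :\ j) (k |: J :\ j) *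
                          e (k |: I :\ j) (k |: J :\ j).
  case/setIP=> jI jJ; apply: lsign_lefschetz_adj_setD1 => //.
  by rewrite (disjointFl dK) // inE jI.
have expand_lef k : k \in F ->
    lsign k (k |: I) (k |: J) * lefschetz e (k |: I) (k |: J) =
    e I J + \sum_(j in I :&: J) lsign k (k |: I) (k |: J) * lsign j (k |: I) (k |: J) *
                                e (k |: I :\ j) (k |: J :\ j).
  by rewrite !inE !negb_or => /andP[/andP[kI kJ] _]; apply: lsign_lefschetz_setU1.
rewrite {1}/lefschetz /lefschetz_adj -/F (eq_bigr _ expand_adj) (eq_bigr _ expand_lef).
rewrite !big_split /= !sumr_const exchange_big /=.
have swap k : k \in F ->
    \sum_(j in I :&: J) lsign k (k |: I) (k |: J) * lsign j (k |: I) (k |: J) *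
                       e (k |: I :\ j) (k |: J :\ j) =
    \sum_(j in I :&: J) lsign j I J * lsign k (k |: I :\ j) (k |: J :\ j) *
                       e (k |: I :\ j) (k |: J :\ j).
  rewrite !inE !negb_or => /andP[/andP[kI kJ] _].
  by apply: eq_bigr => j /setIP[jI jJ]; rewrite lsign_swap.
under [in RHS]eq_bigr => k kF do rewrite swap //.
set S := (X in _ = _ + X - _).
suff -> : e I J *+ #|F| + S - (#|F|%:R - #|I :&: J|%:R) * e I J = e I J *+ #|I :&: J| + S by [].
rewrite -(mulr_natl (e I J) #|F|) -(mulr_natl (e I J) #|I :&: J|).
move: S (e I J) (#|F|%:R) (#|I :&: J|%:R) => S x b a; ring.
Qed.

Lemma disjoint_setU1 K I J k : k \notin K -> [disjoint K & I :|: J] ->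
  [disjoint K & (k |: I) :|: (k |: J)].
Proof.
move=> kK dK; rewrite -setUUr disjoints_subset setCU subsetI -!disjoints_subset.
by rewrite disjoint_sym disjoints1 kK.
Qed.

Lemma disjoint_setD1 K I J j : [disjoint K & I :|: J] -> [disjoint K & (I :\ j) :|: (J :\ j)].
Proof. by apply: disjointWr; rewrite setUSS ?subD1set. Qed.

Lemma card_setC_disjoint K I J : [disjoint K & I :|: J] ->
  (#|~: (I :|: J :|: K)| + #|I| + #|J| + #|K| = n + #|I :&: J|)%N.
Proof.
move=> dK; have := cardsUI (I :|: J) K; have := cardsUI I J; have := cardsC (I :|: J :|: K).
by rewrite [(I :|: J) :&: K]setIC (disjoint_setI0 dK) cards0 card_ord; lia.
Qed.

Lemma lefschetz_eq0 K e I J : (forall I J, [disjoint K & I :|: J] -> e I J = 0) ->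
  [disjoint K & I :|: J] -> lefschetz e I J = 0.
Proof. by move=> e0 dK; apply: big1 => j _; rewrite e0 ?mulr0 // disjoint_setD1. Qed.

Lemma lefschetzB e1 e2 I J :
  lefschetz (fun X Y => e1 X Y - e2 X Y) I J = lefschetz e1 I J - lefschetz e2 I J.
Proof. by rewrite /lefschetz -sumrB; apply: eq_bigr => j _; rewrite mulrBr. Qed.

Definition deg_part (a b : nat) e X Y : C :=
  if (#|X| == a) && (#|Y| == b) then e X Y else 0.

Lemma deg_part_deg a b e X Y : deg_part a b e X Y != 0 -> #|X| = a /\ #|Y| = b.
Proof. by rewrite /deg_part; case: ifP => [/andP[/eqP-> /eqP->]|]; rewrite ?eqxx. Qed.

Lemma lefschetz_deg_part a b e I J : lefschetz (deg_part a b e) I J =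
  if (#|I| == a.+1) && (#|J| == b.+1) then lefschetz e I J else 0.
Proof.
have deg_D1 j : j \in I :&: J ->
    (#|I :\ j| == a) && (#|J :\ j| == b) = (#|I| == a.+1) && (#|J| == b.+1).
  by case/setIP=> jI jJ; rewrite (cardsD1 j I) (cardsD1 j J) jI jJ.
rewrite /lefschetz /deg_part; case: ifP => deg.
  by apply: eq_bigr => j /deg_D1; rewrite deg => ->.
by apply: big1 => j /deg_D1; rewrite deg => ->; rewrite mulr0.
Qed.

Section LefschetzInjective.
Variables (K : {set 'I_n}) (a b : nat) (e : {set 'I_n} -> {set 'I_n} -> C).
Hypotheses (slack : (a + b + #|K| < n)%N)
  (e_deg : forall I J, e I J != 0 -> #|I| = a /\ #|J| = b)
  (lefschetz_e : forall I J, [disjoint K & I :|: J] -> lefschetz e I J = 0).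

Local Notation adj r := (iter r (lefschetz_adj K) e).
Let m := (n - #|K| - (a + b))%N.

Lemma adj_iter_deg r I J : adj r I J != 0 -> (#|I| + r = a /\ #|J| + r = b)%N.
Proof.
elim: r I J => [|r IH] I J; first by move/e_deg => [-> ->]; rewrite !addn0.
rewrite iterS => nz.
have /exists_inP[k kF /IH] : [exists k in ~: (I :|: J :|: K), adj r (k |: I) (k |: J) != 0].
  apply: contraNT nz => /exists_inPn adj0; apply/eqP/big1 => k /adj0/negPn/eqP ->.
  by rewrite mulr0.
move: kF; rewrite !inE !negb_or => /andP[/andP[kI kJ] _].
by rewrite !cardsU1 kI kJ !add1n !addSnnS.
Qed.

Lemma adj_iter_diag r I J : [disjoint K & I :|: J] ->
  (#|~: (I :|: J :|: K)|%:R - #|I :&: J|%:R) * adj r I J = (m + r.*2)%:R * adj r I J.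
Proof.
move=> dK; have [->|/adj_iter_deg[dI dJ]] := eqVneq (adj r I J) 0; first by rewrite !mulr0.
have hF := card_setC_disjoint dK; rewrite -natrB; last by lia.
by congr (_%:R * _); rewrite /m; lia.
Qed.

Lemma lefschetz_adj_iter r I J : [disjoint K & I :|: J] ->
  lefschetz (adj r) I J = - (r * (m + r.-1))%:R * adj r.-1 I J.
Proof.
elim: r I J => [|r IH] I J dK; first by rewrite lefschetz_e // mul0n oppr0 mul0r.
rewrite [adj r.+1]/= lefschetz_commutator // adj_iter_diag //.
have -> : lefschetz_adj K (lefschetz (adj r)) I J =
          - (r * (m + r.-1))%:R * lefschetz_adj K (adj r.-1) I J.
  rewrite /lefschetz_adj mulr_sumr; apply: eq_bigr => k.
  by rewrite !inE !negb_or => /andP[_ kK]; rewrite IH ?disjoint_setU1 // mulrCA.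
have -> : - (r * (m + r.-1))%:R * lefschetz_adj K (adj r.-1) I J =
          - (r * (m + r.-1))%:R * adj r I J.
  by case: r {IH}; rewrite // mul0n oppr0 !mul0r.
by rewrite -mulrBl -opprD -natrD; congr (- _%:R * _); rewrite /=; nia.
Qed.

(* Downward induction on r: [adj r] vanishes for r > a, and
   [lefschetz (adj r.+1) = - (r.+1 * (m + r))%:R * adj r] with m > 0. *)
Lemma lefschetz_inj I J : [disjoint K & I :|: J] -> e I J = 0.
Proof.
suff adj0 d r U V : (r + d = a.+1)%N -> [disjoint K & U :|: V] -> adj r U V = 0.
  by move=> dK; apply: (adj0 a.+1 0%N).
elim: d r U V => [|d IH] r U V hr dK.
  by apply/eqP/negPn/negP => /adj_iter_deg[dU _]; lia.
have L0 : lefschetz (adj r.+1) U V = 0.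
  by apply: (@lefschetz_eq0 K) => // U' V' dK'; apply: IH => //; lia.
move: (lefschetz_adj_iter r.+1 dK); rewrite L0 => /esym/eqP.
by rewrite mulf_eq0 oppr_eq0 pnatr_eq0 => /orP[/eqP|/eqP //]; rewrite /m; nia.
Qed.

End LefschetzInjective.

End Lefschetz.

Section Coordinates.
Variables (C : numClosedFieldType) (n : nat).
Implicit Types (I J : {set 'I_n}) (k : 'I_n).

Lemma wedge_omega (g : cform n C) I J :
  wedge (omega n C) g (I, J) = 'i * lefschetz (fun X Y => g (X, Y)) I J.
Proof.
have row (I1 : {set 'I_n}) : \sum_(J1 : {set 'I_n} | J1 \subset J)
    wsign C I1 J1 (I :\: I1) (J :\: J1) * omega n C (I1, J1) * g (I :\: I1, J :\: J1) =
    if (#|I1| == 1%N) && (I1 \subset J) then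
      wsign C I1 I1 (I :\: I1) (J :\: I1) * 'i * g (I :\: I1, J :\: I1) else 0.
  case: ifP => [/andP[I1_1 sI1J] | not_diag].
    rewrite (bigD1 I1) //= ffunE /= I1_1 eqxx big1 ?addr0 // => J1 /andP[_ neJ1].
    by rewrite ffunE /= [I1 == J1]eq_sym (negPf neJ1) andbF mulr0 mul0r.
  apply: big1 => J1 sJ1; rewrite ffunE /=.
  case: ifP => [/andP[I1_1 /eqP eqJ1]|_]; last by rewrite mulr0 mul0r.
  by move: not_diag; rewrite I1_1 eqJ1 sJ1.
rewrite ffunE /= /lefschetz mulr_sumr (eq_bigr _ (fun I1 _ => row I1)) -big_mkcondr.
rewrite (eq_bigl (mem [set [set j] | j in I :&: J])); last first.
  move=> X; apply/idP/imsetP => [/andP[sXI /andP[/cards1P[x eqX] sXJ]]|[x xIJ ->]].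
    by exists x => //; move: sXI sXJ; rewrite eqX !sub1set inE => -> ->.
  by move: xIJ; rewrite inE !sub1set cards1 => /andP[-> ->].
rewrite big_imset /=; last by move=> x y _ _; apply: set1_inj.
by apply: eq_bigr => x _; rewrite mulrCA mulrA.
Qed.

Definition dzbar k : cform n C :=
  [ffun IJ : {set 'I_n} * {set 'I_n} => if (IJ.1 == set0) && (IJ.2 == [set k]) then 1 else 0].

Lemma dzbar_in_V k : in_V 0 1 (dzbar k).
Proof.
move=> I J; rewrite ffunE /=.
by case: ifP => [/andP[/eqP-> /eqP->] _|_]; rewrite ?cards0 ?cards1 ?eqxx.
Qed.

Lemma wedge_dzbar (a : cform n C) k I J : k \notin J ->
  wedge a (dzbar k) (I, k |: J) = (-1) ^+ ninv J [set k] * a (I, J).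
Proof.
move=> kJ; rewrite ffunE /= (bigD1 I) //= [X in _ + X]big1 ?addr0; last first.
  move=> I1 /andP[sI1 neI1]; apply: big1 => J1 _.
  rewrite ffunE /= (_ : (I :\: I1 == set0) = false) ?mulr0 //.
  by rewrite setD_eq0; apply: contraNF neI1 => sII1; rewrite eqEsubset sI1.
rewrite (bigD1 J) ?subsetUr //= [X in _ + X]big1 ?addr0; last first.
  move=> J1 /andP[sJ1 neJ1]; rewrite ffunE /= setDv eqxx /=.
  case: eqP => [hD|]; last by rewrite mulr0.
  by rewrite (setDU1_eq_set1 kJ sJ1 hD) eqxx in neJ1.
by rewrite ffunE /= setDv setU1D // !eqxx mulr1 /wsign cards0 muln0 ninv_set0r.
Qed.

End Coordinates.

Section Gluing.
Variables (C : numClosedFieldType) (n p q : nat) (alpha : cform n C) (beta : 'I_n -> cform n C).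
Hypotheses (hpq : (p + q <= n)%N) (alpha_deg : in_V p%:Z (q%:Z - 1) alpha)
  (alpha_dzbar : forall k, wedge alpha (dzbar C k) = wedge (omega n C) (beta k)).
Implicit Types (I J X Y : {set 'I_n}) (k : 'I_n).

(* The coefficient of dz_X /\ dzbar_Y in the contraction of beta_k by dzbar_k. *)
Definition gamma_loc k X Y : C := (-1) ^+ ninv Y [set k] * beta k (X, k |: Y).

Lemma alpha_lefschetz_gamma_loc k I J : k \notin I -> k \notin J ->
  alpha (I, J) = 'i * lefschetz (gamma_loc k) I J.
Proof.
move=> kI kJ; have := congr1 (fun f : cform n C => f (I, k |: J)) (alpha_dzbar k).
rewrite /= wedge_dzbar // wedge_omega /lefschetz.
have -> : I :&: (k |: J) = I :&: J.
  by rewrite setIUr [I :&: _]setIC (disjoint_setI0 _) ?set0U // disjoints1.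
move=> /(congr1 ( *%R ((-1) ^+ ninv J [set k]))); rewrite signrMK => ->.
rewrite mulrCA; congr (_ * _); rewrite mulr_sumr; apply: eq_bigr => j /setIP[jI jJ].
have jk : j != k by apply: contraNneq kI => <-.
by rewrite setU1D1 // mulrA lsign_setU1r // -mulrA.
Qed.

Lemma gamma_loc_indep k k' X Y : (#|X|.+1 = p)%N -> (#|Y|.+2 = q)%N ->
  k \notin X :|: Y -> k' \notin X :|: Y -> gamma_loc k X Y = gamma_loc k' X Y.
Proof.
move=> hX hY kXY k'XY; set K := [set k; k'].
have dK : [disjoint K & X :|: Y] by rewrite disjoints_subset subUset !sub1set !in_setC kXY k'XY.
have slack : (#|X| + #|Y| + #|K| < n)%N by rewrite cards2; lia.
pose e := deg_part #|X| #|Y| (fun U V => gamma_loc k U V - gamma_loc k' U V).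
suff : e X Y = 0 by rewrite /e /deg_part !eqxx => /eqP; rewrite subr_eq0 => /eqP.
apply: (lefschetz_inj slack _ _ dK) => [U V|U V dUV]; first exact: deg_part_deg.
rewrite lefschetz_deg_part; case: ifP => // _; rewrite lefschetzB.
have notinUV x : x \in K -> (x \notin U) && (x \notin V).
  by move=> /(disjointFr dUV); rewrite inE => /norP[-> ->].
have /andP[kU kV] := notinUV k (setU11 _ _).
have /andP[k'U k'V] := notinUV k' (setU1r _ (set11 _)).
apply/eqP; rewrite subr_eq0; apply/eqP/(mulfI (neq0Ci C)).
by rewrite -!alpha_lefschetz_gamma_loc.
Qed.

Definition gamma : cform n C :=
  [ffun IJ : {set 'I_n} * {set 'I_n} =>
     if (#|IJ.1|.+1 == p) && (#|IJ.2|.+2 == q) then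
       if [pick k | k \notin IJ.1 :|: IJ.2] is Some k then gamma_loc k IJ.1 IJ.2 else 0
     else 0].

Lemma gamma_deg : in_V (p%:Z - 1) (q%:Z - 2) gamma.
Proof.
move=> I J; rewrite ffunE /=.
by case: ifP => [/andP[/eqP hI /eqP hJ] _|]; [lia | rewrite eqxx].
Qed.

Lemma gammaE k I J : (#|I|.+1 = p)%N -> (#|J|.+2 = q)%N -> k \notin I :|: J ->
  gamma (I, J) = gamma_loc k I J.
Proof.
move=> hI hJ kIJ; rewrite ffunE /= hI hJ !eqxx /=.
by case: pickP => [k' k'IJ|/(_ k)]; [apply: gamma_loc_indep | rewrite kIJ].
Qed.

Lemma alpha_eq_wedge_gamma : alpha = wedge (omega n C) gamma.
Proof.
apply/ffunP => -[I J]; rewrite wedge_omega.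
have sizeD1 j (A : {set 'I_n}) : j \in A -> #|A :\ j|.+1 = #|A|.
  by move=> jA; rewrite (cardsD1 j A) jA.
case: (boolP ((#|I| == p) && (#|J|.+1 == q))) => [/andP[/eqP hI /eqP hJ] | deg].
  have [k kIJ] : exists k, k \notin I :|: J.
    by apply: exists_notin; rewrite card_ord; apply: leq_ltn_trans (leq_card_setU I J) _; lia.
  move: (kIJ); rewrite inE negb_or => /andP[kI kJ].
  rewrite (alpha_lefschetz_gamma_loc kI kJ); congr (_ * _); apply: eq_bigr => j /setIP[jI jJ].
  rewrite (gammaE (k := k)) ?sizeD1 //.
  by apply: contra kIJ; rewrite !inE => /orP[/andP[_ ->]|/andP[_ ->]]; rewrite ?orbT.
rewrite (_ : alpha (I, J) = 0); last first.
  apply/eqP; apply: contraR deg => /alpha_deg[hI hJ]; apply/andP; split; apply/eqP; lia.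
rewrite /lefschetz big1 ?mulr0 // => j /setIP[jI jJ].
by rewrite ffunE /= !sizeD1 // (negPf deg) mulr0.
Qed.

End Gluing.

Theorem lemma2p4 (C : numClosedFieldType) (n p q : nat)
  (hq : (2 <= q)%N) (hpq : (p + q <= n)%N) (alpha : cform n C)
  (halpha : in_V p%:Z (q%:Z - 1) alpha)
  (H : forall phi : cform n C, in_V 0 1 phi ->
         exists beta : cform n C, in_V (p%:Z - 1) (q%:Z - 1) beta /\
           wedge alpha phi = wedge (omega n C) beta) :
  exists gamma : cform n C, in_V (p%:Z - 1) (q%:Z - 2) gamma /\
    alpha = wedge (omega n C) gamma.
Proof.
have /fin_all_exists[beta alpha_dzbar] : forall k : 'I_n,
    exists b : cform n C, wedge alpha (dzbar C k) = wedge (omega n C) b.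
  by move=> k; have [b [_ hb]] := H _ (@dzbar_in_V C n k); exists b.
exists (gamma p q beta); split; first exact: gamma_deg.
exact: alpha_eq_wedge_gamma.
Qed.
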